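(* Under the standing assumptions, suppose in addition that $J$ is absolutely $p$-homogeneous. If $u$ is a $p$-eigenvector of $J$ with subgradient $\zeta$ and eigenvalue $\lambda$, then $|\zeta|_{H^*}\le|\tilde\zeta|_{H^*}$ for every $\tilde\zeta\in\partial J(u)$.
   Context: Standing assumptions: $X$ is a real reflexive Banach space with dual $X^*$ and duality pairing $\langle\cdot,\cdot\rangle$; $\Gamma_0(X)$ is the class of proper, lower semi-continuous, convex functionals $X\to\mathbb{R}\cup\{+\infty\}$. Fix $1<p<\infty$. Let $J\in\Gamma_0(X)$, and let $H\in\Gamma_0(X)$ be absolutely $p$-homogeneous ($H(tu)=|t|^pH(u)$) such that $|u|_H:=(pH(u))^{1/p}$ is a norm on $X$, so $H(u)=\frac1p|u|_H^p$. The dual norm is $|\zeta|_{H^*}=\sup_{u\ne0}\langle\zeta,u\rangle/|u|_H$. The subdifferential is $\partial J(u)=\{\zeta\in X^*:\ J(u)+\langle\zeta,v-u\rangle\le J(v)\ \forall v\in X\}$. Growth assumption: there is $c>0$ with $H(u)\le cJ(u)$ for all $u\in X$. The Rayleigh quotient is $R(u)=J(u)/H(u)$ for $u\ne0$. A $p$-eigenvector of $J$: $u\in X\setminus\{0\}$ with subgradient $\zeta\in\partial J(u)$ and eigenvalue $\lambda=R(u)\in\mathbb{R}$ such that $\zeta\in\lambda\,\partial H(u)$. *)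

From HB Require Import structures.
From mathcomp Require Import all_boot all_order all_algebra.
From mathcomp Require Import all_classical all_reals all_analysis.
Set Implicit Arguments. Unset Strict Implicit. Unset Printing Implicit Defensive.
Import Order.TTheory GRing.Theory Num.Theory.
Import numFieldNormedType.Exports.
Local Open Scope classical_set_scope.
Local Open Scope ring_scope.

(* X is a real Banach space (completeNormedModType R,
   R : realType); its (topological) dual X^* is represented by the functions
   zeta : X -> R that are linear and continuous; the duality pairing
   <zeta, u> is application zeta u. *)

Section Defs.
Context {R : realType} {X : completeNormedModType R}.

Definition is_dual (zeta : X -> R) : Prop :=
  (forall (a : R) (x y : X), zeta (a *: x + y) = a * zeta x + zeta y)
  /\ continuous zeta.

(* Reflexivity: every bounded linear functional on X^* (bounded w.r.t. the
   dual operator norm, expressed without a sup) is evaluation at a point of X. *)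
Definition reflexive_space : Prop :=
  forall Phi : (X -> R) -> R,
    (forall (a : R) (z1 z2 : X -> R), is_dual z1 -> is_dual z2 ->
        Phi (fun x => a * z1 x + z2 x) = a * Phi z1 + Phi z2) ->
    (exists C : R, forall z : X -> R, is_dual z -> forall M : R,
        (forall x, `|z x| <= M * `|x|) -> `|Phi z| <= C * M) ->
    exists x0 : X, forall z, is_dual z -> Phi z = z x0.

Local Open Scope ereal_scope.

Definition proper_fun (F : X -> \bar R) : Prop :=
  (forall x, F x != -oo) /\ (exists x, F x < +oo).

Definition convex_fun (F : X -> \bar R) : Prop :=
  forall (t : R) (x y : X), (0 < t < 1)%R ->
    F (t *: x + (1 - t) *: y)%R <= t%:E * F x + (1 - t)%:E * F y.

Definition Gamma0 (F : X -> \bar R) : Prop :=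
  proper_fun F /\ lower_semicontinuous F /\ convex_fun F.

Definition abs_p_homogeneous (p : R) (F : X -> \bar R) : Prop :=
  forall (t : R) (u : X), F (t *: u) = (`|t| `^ p)%:E * F u.

Definition Hnorm (p : R) (H : X -> \bar R) (u : X) : R :=
  (p * fine (H u)) `^ (p^-1).

Definition Hnorm_is_norm (p : R) (H : X -> \bar R) : Prop :=
  (forall u, H u \is a fin_num) /\
  (forall u, (0 <= Hnorm p H u)%R) /\
  (forall u, Hnorm p H u = 0%R -> u = 0%R) /\
  (forall (t : R) u, Hnorm p H (t *: u) = (`|t| * Hnorm p H u)%R) /\
  (forall u v, (Hnorm p H (u + v)%R <= Hnorm p H u + Hnorm p H v)%R).

Definition Hdualnorm (p : R) (H : X -> \bar R) (zeta : X -> R) : \bar R :=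
  ereal_sup [set (zeta u / Hnorm p H u)%:E | u in [set u : X | u != 0%R]].

Definition subdiff (F : X -> \bar R) (u : X) : set (X -> R) :=
  [set zeta | is_dual zeta /\ forall v, F u + (zeta (v - u)%R)%:E <= F v].

Definition rayleigh (J H : X -> \bar R) (u : X) : \bar R := J u * (H u)^-1.

Definition p_eigenvector (J H : X -> \bar R) (u : X) (zeta : X -> R)
    (lambda : R) : Prop :=
  u != 0%R /\ zeta \in subdiff J u /\ lambda%:E = rayleigh J H u /\
  exists2 eta, eta \in subdiff H u & zeta = (fun x => (lambda * eta x)%R).

End Defs.

From HB Require Import structures.
From mathcomp Require Import all_boot all_order all_algebra.
From mathcomp Require Import all_classical all_reals all_analysis.
From mathcomp Require Import lra.

Set Implicit Arguments.
Unset Strict Implicit.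
Unset Printing Implicit Defensive.
Import Order.TTheory GRing.Theory Num.Theory.
Import numFieldNormedType.Exports.
Local Open Scope classical_set_scope.
Local Open Scope ring_scope.

(* Euler's identity: a subgradient [z] of an absolutely p-homogeneous [F] at
   [u] satisfies [z u = p F(u)], because [s |-> F(s u) = s^p F(u)] lies above
   the line [s |-> F(u) + (s - 1) z u], which must then be its tangent at
   [s = 1].  Hence all subgradients of [J] at [u] agree at [u].  Since [H] is a
   function of [|.|_H], a subgradient [eta] of [H] at [u] attains its dual norm
   at [u]: comparing [H] at [u] and at the rescaling of [v] to the H-sphere
   through [u] gives [eta v / |v|_H <= eta u / |u|_H].  So for [zeta = lambda
   eta] with [lambda >= 0],
   [|zeta|_H* = zeta u / |u|_H = zeta' u / |u|_H <= |zeta'|_H*]. *)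

Lemma tangent_powR_slope (R : realType) (p a j : R) : 1 < p ->
  (forall s : R, 0 < s -> j + (s - 1) * a <= s `^ p * j) -> a = p * j.
Proof.
move=> p1 tangent.
pose f := (a \*: (@id R)) - (j \*: (fun s : R => s `^ p)).
have df : is_derive (1:R) 1 f (a *: 1 - j *: (p * 1 `^ (p - 1))).
  apply: is_deriveB; apply: is_deriveZ => //.
  exact/is_derive1_powR/ltr01.
(* [f] attains its maximum on [(0, 2)] at [1]. *)
have df0 : is_derive (1:R) 1 f 0.
  apply: (@derive1_at_max R f 0 2).
  - by rewrite ler0n.
  - move=> t; rewrite in_itv /= => /andP[t0 _].
    apply: derivableB => //; apply: derivableZ => //.
    by apply: derivable_powR; rewrite in_itv /= t0.
  - by rewrite in_itv /= ltr01 ltr1n.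
  - move=> t; rewrite in_itv /= => /andP[t0 _].
    have -> : f t = a * t - j * t `^ p by [].
    have -> : f 1 = a * 1 - j * 1 `^ p by [].
    by have := tangent t t0; rewrite powR1 mulr1; nra.
move: (@derive_val _ _ _ _ _ _ _ df).
rewrite (@derive_val _ _ _ _ _ _ _ df0) powR1 !mulr1 => /eqP.
by rewrite eq_sym subr_eq0 /GRing.scale /= mulr1 mulrC => /eqP.
Qed.

Section Subdifferential.
Context {R : realType} {X : completeNormedModType R}.

Lemma dual0 (z : X -> R) : is_dual z -> z 0 = 0.
Proof.
move=> [lin _]; have := lin 1 0 0; rewrite scale1r addr0 mul1r => /eqP.
by rewrite -subr_eq0 opprD addrA subrr sub0r oppr_eq0 => /eqP.
Qed.

Lemma dualZ (z : X -> R) a x : is_dual z -> z (a *: x) = a * z x.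
Proof. by move=> zd; have := proj1 zd a x 0; rewrite dual0 // !addr0. Qed.

Lemma dualB (z : X -> R) x y : is_dual z -> z (x - y) = z x - z y.
Proof.
move=> zd; have := proj1 zd 1 x (- y); rewrite scale1r mul1r => ->.
by rewrite -scaleN1r dualZ // mulN1r.
Qed.

Section DualNorm.
Variables (p : R) (H : X -> \bar R) (z : X -> R).

Lemma Hdualnorm_ge v : v != 0 -> ((z v / Hnorm p H v)%:E <= Hdualnorm p H z)%E.
Proof. by move=> v0; apply: ereal_sup_ubound; exists v. Qed.

Lemma Hdualnorm_le (M : R) :
  (forall v, v != 0 -> z v / Hnorm p H v <= M) -> (Hdualnorm p H z <= M%:E)%E.
Proof. by move=> zM; apply: ge_ereal_sup => _ [v /= v0 <-]; rewrite lee_fin zM. Qed.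

End DualNorm.

Local Open Scope ereal_scope.

Lemma subdiff_fin_num (F : X -> \bar R) (z : X -> R) u :
  proper_fun F -> z \in subdiff F u -> F u \is a fin_num.
Proof.
move=> [Fnoo [x Fx]] /set_mem[_ zsub]; rewrite fin_numE Fnoo /=.
apply/eqP => Fu; have := zsub x; rewrite Fu addye // leye_eq => /eqP Fxoo.
by move: Fx; rewrite Fxoo ltxx.
Qed.

(* [0 = F(u/2 - u/2) <= F(u)/2 + F(-u)/2 = F(u)]. *)
Lemma abs_p_homogeneous_convex_ge0 (p : R) (F : X -> \bar R) u : (0 < p)%R ->
  abs_p_homogeneous p F -> convex_fun F -> F u != -oo -> 0 <= F u.
Proof.
move=> p0 Fhom Fcvx Fu_noo.
have F0 : F 0%R = 0.
  by rewrite -(scale0r u) Fhom normr0 powR0 ?mul0e // gt_eqF.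
have FN : F (- u)%R = F u by rewrite -scaleN1r Fhom normrN normr1 powR1 mul1e.
have := Fcvx (1/2)%R u (- u)%R; rewrite (_ : (1 - 1/2 = 1/2 :> R)%R); last lra.
rewrite scalerN subrr F0 FN; move: Fu_noo; case: (F u) => // r _.
rewrite -!EFinM -EFinD !lee_fin; lra.
Qed.

Lemma subdiff_euler (p : R) (F : X -> \bar R) u (z : X -> R) (j : R) :
  (1 < p)%R -> abs_p_homogeneous p F ->
  F u = j%:E -> z \in subdiff F u -> (z u = p * j)%R.
Proof.
move=> p1 Fhom Fu /set_mem[zd zsub]; apply: tangent_powR_slope => // s s0.
have := zsub (s *: u)%R; rewrite Fhom Fu dualB // dualZ // -EFinD -EFinM.
by rewrite lee_fin gtr0_norm // mulrBl mul1r.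
Qed.

Section HomogeneousNorm.
Variables (p : R) (H : X -> \bar R).
Hypotheses (p1 : (1 < p)%R) (Hhom : abs_p_homogeneous p H).
Hypotheses (Hcvx : convex_fun H) (Hnorm_norm : Hnorm_is_norm p H).

Let p_gt0 : (0 < p)%R. Proof. exact: lt_trans ltr01 p1. Qed.

Lemma fine_H_ge0 v : (0 <= fine (H v))%R.
Proof.
have [Hfin _] := Hnorm_norm; rewrite -lee_fin fineK //.
apply: (abs_p_homogeneous_convex_ge0 p_gt0 Hhom) => //.
by have /fin_numP[] := Hfin v.
Qed.

Lemma Hnorm_powR v : (Hnorm p H v `^ p = p * fine (H v))%R.
Proof.
rewrite /Hnorm -powRrM mulVf ?gt_eqF // powRr1 //.
exact: mulr_ge0 (ltW p_gt0) (fine_H_ge0 v).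
Qed.

Lemma Hnorm_gt0 v : v != 0%R -> (0 < Hnorm p H v)%R.
Proof.
have [_ [Hn0 [Hdef _]]] := Hnorm_norm.
by move=> v0; rewrite lt0r Hn0 andbT; apply: contra_neq v0; apply: Hdef.
Qed.

Lemma fine_H_gt0 v : v != 0%R -> (0 < fine (H v))%R.
Proof.
move=> /Hnorm_gt0 nv0; rewrite -(pmulr_rgt0 _ p_gt0) -Hnorm_powR.
by rewrite powR_gt0.
Qed.

Lemma H_eq_of_Hnorm v w : Hnorm p H v = Hnorm p H w -> H v = H w.
Proof.
have [Hfin _] := Hnorm_norm.
move=> nvw; rewrite -(fineK (Hfin v)) -(fineK (Hfin w)); congr (_%:E).
by apply: (mulfI (lt0r_neq0 p_gt0)); rewrite -!Hnorm_powR nvw.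
Qed.

(* Compare [H] at [u] and at [w := (|u|_H / |v|_H) v], which lie on the same
   H-sphere. *)
Lemma subdiff_Hnorm_ratio_le u v (eta : X -> R) :
  eta \in subdiff H u -> u != 0%R -> v != 0%R ->
  (eta v / Hnorm p H v <= eta u / Hnorm p H u)%R.
Proof.
move=> /set_mem[etad etasub] u0 v0.
have [_ [_ [_ [HnormZ _]]]] := Hnorm_norm.
have nu0 := Hnorm_gt0 u0; have nv0 := Hnorm_gt0 v0.
pose w := (Hnorm p H u / Hnorm p H v) *: v.
have Hw : H w = H u.
  apply: H_eq_of_Hnorm; rewrite HnormZ gtr0_norm ?divr_gt0 //.
  by rewrite mulfVK ?gt_eqF.
have [Hfin _] := Hnorm_norm.
have := etasub w; rewrite Hw dualB // -[leRHS]adde0 leeD2lE // lee_fin.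
rewrite subr_le0 dualZ // => le_w; rewrite ler_pdivlMr //.
by apply: le_trans le_w; rewrite [leRHS]mulrC mulrA mulrAC.
Qed.

Lemma Hdualnorm_subdiff_le u (eta : X -> R) (lambda : R) :
  eta \in subdiff H u -> u != 0%R -> (0 <= lambda)%R ->
  Hdualnorm p H (fun x => lambda * eta x)%R <=
  (lambda * eta u / Hnorm p H u)%:E.
Proof.
move=> etaH u0 l0; apply: Hdualnorm_le => v v0.
by rewrite -!mulrA ler_wpM2l // subdiff_Hnorm_ratio_le.
Qed.

End HomogeneousNorm.
End Subdifferential.

Theorem mainTheorem5 (R : realType) (X : completeNormedModType R)
  (p : R) (J H : X -> \bar R) (c : R) (u : X) (zeta : X -> R) (lambda : R) :
  reflexive_space (X := X) ->
  1 < p ->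
  Gamma0 J -> Gamma0 H ->
  abs_p_homogeneous p H -> Hnorm_is_norm p H ->
  0 < c -> (forall v, (H v <= c%:E * J v)%E) ->
  abs_p_homogeneous p J ->
  p_eigenvector J H u zeta lambda ->
  forall zeta', zeta' \in subdiff J u ->
    (Hdualnorm p H zeta <= Hdualnorm p H zeta')%E.
Proof.
move=> _ p1 [Jprop [_ Jcvx]] [_ [_ Hcvx]] Hhom Hnorm_norm _ _ Jhom.
move=> [u0 [zetaJ [_ [eta etaH zeta_eta]]]] zeta' zeta'J.
have p0 : 0 < p by exact: lt_trans ltr01 p1.
have Jfin := subdiff_fin_num Jprop zetaJ.
have Ju : J u = (fine (J u))%:E by rewrite fineK.
have Hu : H u = (fine (H u))%:E by rewrite fineK // (Hnorm_norm.1 u).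
have j0 : 0 <= fine (J u).
  by rewrite -lee_fin -Ju (abs_p_homogeneous_convex_ge0 p0 Jhom) // Jprop.1.
have h0 := fine_H_gt0 p1 Hhom Hcvx Hnorm_norm u0.
have zeta_u := subdiff_euler p1 Jhom Ju zetaJ.
have zeta'_u := subdiff_euler p1 Jhom Ju zeta'J.
have eta_u := subdiff_euler p1 Hhom Hu etaH.
have lambda_eta_u : lambda * eta u = zeta' u.
  by rewrite zeta'_u -zeta_u zeta_eta.
have l0 : 0 <= lambda.
  have : 0 <= lambda * eta u by rewrite lambda_eta_u zeta'_u mulr_ge0 // ltW.
  by rewrite eta_u pmulr_lge0 // mulr_gt0.
rewrite zeta_eta.
apply: le_trans (Hdualnorm_subdiff_le p1 Hhom Hcvx Hnorm_norm etaH u0 l0) _.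
by rewrite lambda_eta_u Hdualnorm_ge.
Qed.
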